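(* Let $G$ be a finite block graph that is identifiable, i.e. $G$ has no pair of distinct vertices $u,v$ with $N[u]=N[v]$. Then $\gamma^{ID}(G)\leq n_Q(G)$, where $n_Q(G)$ denotes the number of maximal cliques of $G$.
   Context: A block graph is a graph in which every maximal 2-connected subgraph (block) is a clique. For a vertex $u$, $N(u)$ is its open neighborhood and $N[u]=N(u)\cup\{u\}$ its closed neighborhood. A set $C\subseteq V(G)$ is an identifying code (ID-code) if $N[u]\cap C\neq\emptyset$ for every vertex $u$ and $N[u]\cap C\neq N[v]\cap C$ for all distinct vertices $u,v$. A graph admits an ID-code iff it is identifiable (has no distinct $u,v$ with $N[u]=N[v]$). $\gamma^{ID}(G)$ is the minimum cardinality of an ID-code of $G$. $n_Q(G)$ is the number of maximal cliques of $G$. *)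

(* A finite simple graph is a symmetric irreflexive
   relation e : rel T on a finType T. *)
From mathcomp Require Import all_boot.
Set Implicit Arguments. Unset Strict Implicit. Unset Printing Implicit Defensive.

Section Graphs.
Variables (T : finType) (e : rel T).

Definition cnbhd (u : T) : {set T} := [set v | (v == u) || e u v].

Definition induced_rel (S : {set T}) : rel T :=
  [rel x y | [&& x \in S, y \in S & e x y]].

Definition connected_set (S : {set T}) : Prop :=
  forall x y, x \in S -> y \in S -> connect (induced_rel S) x y.

Definition biconnected_set (S : {set T}) : Prop :=
  2 < #|S| /\ connected_set S /\ forall v, v \in S -> connected_set (S :\ v).

(* a block (with >= 3 vertices): a maximal vertex set inducing a
   2-connected subgraph *)
Definition is_block (S : {set T}) : Prop :=
  biconnected_set S /\
  forall S' : {set T}, S \subset S' -> biconnected_set S' -> S' = S.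

Definition is_clique (K : {set T}) : bool :=
  [forall x in K, forall y in K, (x != y) ==> e x y].

Definition block_graph : Prop := forall S, is_block S -> is_clique S.

Definition identifiable : Prop :=
  forall u v, u != v -> cnbhd u != cnbhd v.

Definition is_idcode (C : {set T}) : bool :=
  [forall u, cnbhd u :&: C != set0] &&
  [forall u, forall v, (u != v) ==> (cnbhd u :&: C != cnbhd v :&: C)].

(* minimum size of an ID-code (T itself is an ID-code when G is
   identifiable, so the default #|T| is never below the true minimum) *)
Definition gammaID : nat := \big[minn/#|T|]_(C : {set T} | is_idcode C) #|C|.

Definition nQ : nat := #|[set K : {set T} | maxset is_clique K]|.

End Graphs.

From mathcomp Require Import all_boot.

Set Implicit Arguments. Unset Strict Implicit. Unset Printing Implicit Defensive.

(* By induction on a vertex set [V]: in every induced subgraph G[V], some [C]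
   of size at most the number of maximal cliques of G[V] dominates [V] and
   separates every two vertices that are not twins in G[V].  If G[V] has twins
   [u], [v], a code for G[V - u] works for G[V], and deleting a vertex never
   increases the number of maximal cliques.  Otherwise the first vertex [a] of
   a longest path has at most one neighbour: a neighbour further along the path
   closes a cycle, which lies in a block and hence is a clique, and this makes
   [a] a twin of its successor.  Deleting such a leaf [s] loses the maximal
   clique N[s], and a code for G[V - s] is extended by one vertex: [s] itself,
   or, if [s] and its neighbour [t] are not yet separated, a second neighbour
   of [t] -- unless [t] has a twin [v] in G[V - s], in which case [v] replaces
   [t] and [s] is added. *)

Section IdentifyingCodes.
Variables (T : finType) (e : rel T).
Hypothesis e_sym : symmetric e.

Local Notation N := (cnbhd e).

Lemma cnbhdE x y : (y \in N x) = (y == x) || e x y.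
Proof. by rewrite inE. Qed.

Lemma cnbhd_refl x : x \in N x.
Proof. by rewrite cnbhdE eqxx. Qed.

Lemma cnbhd_sym x y : (y \in N x) = (x \in N y).
Proof. by rewrite !cnbhdE eq_sym e_sym. Qed.

Definition dominates (C : {set T}) x := N x :&: C != set0.

Definition separates (C : {set T}) x y := N x :&: C != N y :&: C.

Lemma dominatesP (C : {set T}) x :
  reflect (exists2 c, c \in C & c \in N x) (dominates C x).
Proof.
rewrite /dominates; apply: (iffP (set0Pn _)) => [[c] | [c cC cx]].
  by rewrite in_setI => /andP[cx cC]; exists c.
by exists c; rewrite in_setI cx.
Qed.

Lemma separatesP (C : {set T}) x y :
  reflect (exists2 c, c \in C & (c \in N x) != (c \in N y)) (separates C x y).
Proof.
apply: (iffP idP) => [neq | [c cC]]; last first.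
  by apply: contra => /eqP/setP/(_ c); rewrite !in_setI cC !andbT => ->.
have /existsP[c] : [exists c, (c \in N x :&: C) != (c \in N y :&: C)].
  apply: contraR neq => /existsPn same; apply/eqP/setP => c.
  exact/eqP/negPn/same.
by rewrite !in_setI; case cC: (c \in C); rewrite ?andbF ?andbT //; exists c.
Qed.

Lemma separatesxx (C : {set T}) x : separates C x x = false.
Proof. by rewrite /separates eqxx. Qed.

Lemma separates_sym (C : {set T}) x y : separates C x y = separates C y x.
Proof. by rewrite /separates eq_sym. Qed.

Lemma dominatesS (C D : {set T}) x : C \subset D -> dominates C x -> dominates D x.
Proof.
by move=> /subsetP CD /dominatesP[c /CD cD cx]; apply/dominatesP; exists c.
Qed.

Lemma separatesS (C D : {set T}) x y : C \subset D -> separates C x y -> separates D x y.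
Proof. by move=> /setIidPr <-; rewrite /separates !setIA; apply: contra => /eqP ->. Qed.

Lemma separates_setD1 (V : {set T}) s x y :
  (s \in N x) = (s \in N y) -> separates V x y -> separates (V :\ s) x y.
Proof.
move=> sxy /separatesP[c cV cxy]; apply/separatesP; exists c => //.
by rewrite in_setD1 cV andbT; apply: contraNneq cxy => ->; rewrite sxy.
Qed.

Definition twin_cover (W C D : {set T}) :=
  {in C, forall c, exists2 d, d \in D & ~~ separates W c d}.

Lemma twin_mem (W : {set T}) c d x :
  ~~ separates W c d -> x \in W -> (c \in N x) = (d \in N x).
Proof.
move=> /negPn/eqP/setP/(_ x) cdx xW.
by move: cdx; rewrite !in_setI xW !andbT !(cnbhd_sym x).
Qed.

Lemma dominates_cover (W C D : {set T}) x :
  twin_cover W C D -> x \in W -> dominates C x -> dominates D x.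
Proof.
move=> cov xW /dominatesP[c /cov[d dD cd] cx]; apply/dominatesP.
by exists d; rewrite // -(twin_mem cd xW).
Qed.

Lemma separates_cover (W C D : {set T}) x y :
  twin_cover W C D -> x \in W -> y \in W -> separates C x y -> separates D x y.
Proof.
move=> cov xW yW /separatesP[c /cov[d dD cd] cxy]; apply/separatesP.
by exists d; rewrite // -(twin_mem cd xW) -(twin_mem cd yW).
Qed.

Lemma twin_cover_swap (W C : {set T}) t v :
  ~~ separates W t v -> twin_cover W C (v |: (C :\ t)).
Proof.
move=> tv c cC; have [-> | ct] := eqVneq c t; first by exists v; rewrite ?setU11.
by exists c; rewrite ?separatesxx // in_setU1 in_setD1 ct cC orbT.
Qed.

(* [N x :&: V] is the closed neighbourhood of [x] in G[V], so [separates V x y]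
   says that [x] and [y] are not twins of G[V]: [idcode_in V] is an
   identifying code of G[V] up to its twins. *)
Definition idcode_in (V C : {set T}) : Prop :=
  [/\ C \subset V, {in V, forall x, dominates C x}
    & {in V &, forall x y, separates V x y -> separates C x y}].

Lemma idcode_in_swap (W C : {set T}) t v :
  v \in W -> ~~ separates W t v -> idcode_in W C -> idcode_in W (v |: (C :\ t)).
Proof.
move=> vW tv [CW dom sep]; have cov := twin_cover_swap (C := C) tv; split.
- by rewrite subUset sub1set vW (subset_trans (subsetDl _ _) CW).
- by move=> x xW; apply: dominates_cover cov xW (dom x xW).
- by move=> x y xW yW /(sep x y xW yW); apply: separates_cover cov xW yW.
Qed.

Lemma idcode_in_twin_del (V C : {set T}) u v :
  v \in V -> u != v -> ~~ separates V u v -> idcode_in (V :\ u) C -> idcode_in V C.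
Proof.
move=> vV uv uvV [CV' dom sep].
have vV' : v \in V :\ u by rewrite in_setD1 eq_sym uv vV.
have CV : C \subset V := subset_trans CV' (subsetDl _ _).
pose rep x := if x == u then v else x.
have repV x : x \in V -> rep x \in V :\ u.
  by rewrite /rep; case: eqVneq => [// | xu xV]; rewrite in_setD1 xu.
have repE (S : {set T}) x : S \subset V -> N (rep x) :&: S = N x :&: S.
  move=> SV; have twinV : ~~ separates V (rep x) x.
    by rewrite /rep; case: eqVneq => [-> | _]; rewrite ?separatesxx // separates_sym.
  by apply/eqP/negPn; apply: contraNN twinV; exact: separatesS.
have repV' x : x \in V -> rep x \in V by move/repV; rewrite in_setD1 => /andP[].
split=> [|| x y xV yV sepV] //.
  by move=> x xV; rewrite /dominates -(repE C x CV); apply: dom; exact: repV.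
rewrite /separates -(repE C x CV) -(repE C y CV); apply: sep; rewrite ?repV //.
apply: (separatesS (C := v |: (V :\ u))); first by rewrite subUset sub1set vV' subxx.
apply: separates_cover (twin_cover_swap (C := V) uvV) _ _ _; rewrite ?repV' //.
by rewrite /separates !repE.
Qed.

Lemma idcode_in_setU1 (V C : {set T}) s :
  s \in V -> idcode_in (V :\ s) C ->
  {in N s :&: V &, forall x y, x != y -> separates C x y} ->
  idcode_in V (s |: C).
Proof.
move=> sV [CV' dom sep] sepNs; have sub := subsetUr [set s] C.
split=> [|x xV | x y xV yV sepV].
- by rewrite subUset sub1set sV (subset_trans CV' (subsetDl _ _)).
- have [-> | xs] := eqVneq x s.
    by apply/dominatesP; exists s; rewrite ?setU11 ?cnbhd_refl.
  by apply: dominatesS sub (dom x _); rewrite in_setD1 xs.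
have xy : x != y by apply: contraTneq sepV => ->; rewrite separatesxx.
case xs: (s \in N x); case ys: (s \in N y).
- by apply: separatesS sub (sepNs x y _ _ xy); rewrite in_setI cnbhd_sym ?xs ?ys.
- by apply/separatesP; exists s; rewrite ?setU11 ?xs ?ys.
- by apply/separatesP; exists s; rewrite ?setU11 ?xs ?ys.
have nsx : x != s by apply: contraFneq xs => ->; exact: cnbhd_refl.
have nsy : y != s by apply: contraFneq ys => ->; exact: cnbhd_refl.
apply: separatesS sub (sep x y _ _ _); rewrite ?in_setD1 ?nsx ?nsy //.
by apply: separates_setD1 sepV; rewrite xs ys.
Qed.

Lemma cliqueP (K : {set T}) :
  reflect {in K &, forall x y, x != y -> e x y} (is_clique e K).
Proof.
apply: (iffP forall_inP) => [cK x y xK yK | cK x xK].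
  by move/forall_inP/(_ y yK)/implyP: (cK x xK).
by apply/forall_inP => y yK; apply/implyP; exact: cK.
Qed.

Lemma clique_subset (K K' : {set T}) : K \subset K' -> is_clique e K' -> is_clique e K.
Proof.
by move=> /subsetP KK' /cliqueP cK'; apply/cliqueP => x y /KK' + /KK'; exact: cK'.
Qed.

Lemma clique1 x : is_clique e [set x].
Proof. by apply/cliqueP => y z /set1P-> /set1P->; rewrite eqxx. Qed.

Lemma clique2 x y : e x y -> is_clique e [set x; y].
Proof.
move=> xy; apply/cliqueP => u v; rewrite !inE.
by case/orP=> /eqP-> /orP[]/eqP->; rewrite ?eqxx // e_sym.
Qed.

Definition clique_in (V K : {set T}) := (K \subset V) && is_clique e K.

Definition maxclique_in (V K : {set T}) := (K != set0) && maxset (clique_in V) K.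

(* Only nonempty cliques count, so that deleting an isolated vertex lowers
   the count; [nQ_in [set: T]] is then at most [nQ e]. *)
Definition nQ_in (V : {set T}) := #|[set K | maxclique_in V K]|.

Definition clique_extend s (K : {set T}) :=
  if is_clique e (s |: K) then s |: K else K.

Lemma clique_extendK s (K : {set T}) : s \notin K -> clique_extend s K :\ s = K.
Proof.
move=> sK; rewrite /clique_extend; case: ifP => _; first exact: setU1K.
by apply/setP => x; rewrite in_setD1; case: eqVneq => // ->; rewrite (negbTE sK).
Qed.

Lemma maxclique_extend (V K : {set T}) s :
  s \in V -> maxclique_in (V :\ s) K -> maxclique_in V (clique_extend s K).
Proof.
move=> sV /andP[K0 /maxsetP[/andP[KV' cK] maxK]].
have KV : K \subset V := subset_trans KV' (subsetDl _ _).
have sK : s \notin K by apply/negP => /(subsetP KV'); rewrite in_setD1 eqxx.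
have restrict K2 : clique_in V K2 -> K \subset K2 -> K2 :\ s = K.
  move=> /andP[K2V cK2] KK2; apply: maxK; last first.
    apply/subsetP => x xK; rewrite in_setD1 (subsetP KK2) // andbT.
    by apply: contraNneq sK => <-.
  by rewrite /clique_in (setSD _ K2V) (clique_subset (subsetDl _ _) cK2).
rewrite /clique_extend /maxclique_in; case: ifP => cKs.
  apply/andP; split; first by apply/set0Pn; exists s; exact: setU11.
  apply/maxsetP; split=> [|K2 cK2 KK2]; first by rewrite /clique_in subUset sub1set sV KV.
  rewrite -(restrict K2 cK2 (subset_trans (subsetUr _ _) KK2)) setD1K //.
  by apply: (subsetP KK2); exact: setU11.
rewrite K0; apply/maxsetP; split=> [|K2 cK2 KK2]; first by rewrite /clique_in KV.
have [sK2 | sK2] := boolP (s \in K2).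
  case/andP: cK2 => _ cK2; move: cKs; rewrite (clique_subset _ cK2) //.
  by rewrite subUset sub1set sK2 KK2.
rewrite -(restrict K2 cK2 KK2); apply/setP => x; rewrite in_setD1.
by case: eqVneq => // ->; rewrite (negbTE sK2).
Qed.

Lemma extend_maxcliques (V : {set T}) s :
  s \in V ->
  [set clique_extend s K | K in [set K | maxclique_in (V :\ s) K]]
    \subset [set K | maxclique_in V K]
  /\ #|[set clique_extend s K | K in [set K | maxclique_in (V :\ s) K]]| = nQ_in (V :\ s).
Proof.
move=> sV; split.
  apply/subsetP => _ /imsetP[K KM ->]; rewrite inE in KM *.
  by rewrite in_set; exact: maxclique_extend.
apply: card_in_imset => K1 K2; rewrite !inE => /andP[_ /maxsetp/andP[K1V _]].
move=> /andP[_ /maxsetp/andP[K2V _]] eqK.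
have notin (K : {set T}) : K \subset V :\ s -> s \notin K.
  by move=> KV; apply/negP => /(subsetP KV); rewrite in_setD1 eqxx.
by rewrite -(clique_extendK (notin _ K1V)) eqK clique_extendK // notin.
Qed.

Lemma nQ_in_setD1 (V : {set T}) s : s \in V -> nQ_in (V :\ s) <= nQ_in V.
Proof. by move=> sV; have [sub <-] := extend_maxcliques sV; exact: subset_leq_card. Qed.

Lemma cnbhd_maxclique (V : {set T}) s :
  s \in V -> is_clique e (N s :&: V) -> maxclique_in V (N s :&: V).
Proof.
move=> sV cL; have sL : s \in N s :&: V by rewrite in_setI cnbhd_refl.
apply/andP; split; first by apply/set0Pn; exists s.
apply/maxsetP; split=> [|K /andP[KV cK] LK]; first by rewrite /clique_in subsetIr.
apply/eqP; rewrite eqEsubset LK andbT; apply/subsetP => x xK.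
rewrite in_setI (subsetP KV) // andbT cnbhdE; case: eqVneq => //= xs.
by move/cliqueP: cK; apply => //; [exact: (subsetP LK) | rewrite eq_sym].
Qed.

Lemma nQ_in_setD1_lt (V : {set T}) s :
  s \in V -> is_clique e (N s :&: V) -> ~~ maxclique_in (V :\ s) (N s :&: V :\ s) ->
  nQ_in (V :\ s) < nQ_in V.
Proof.
move=> sV cL notmax; have [sub <-] := extend_maxcliques sV.
apply: proper_card; apply/properP; split=> //.
exists (N s :&: V); first by rewrite inE cnbhd_maxclique.
apply/imsetP => -[K]; rewrite inE => maxK eqL; apply: (negP notmax).
have /maxsetp/andP[KV _] := proj2 (andP maxK).
move: eqL; rewrite /clique_extend; case: ifP => _ eqL.
  by rewrite eqL setU1K //; apply/negP => /(subsetP KV); rewrite in_setD1 eqxx.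
have : s \in N s :&: V by rewrite in_setI cnbhd_refl.
by rewrite eqL => /(subsetP KV); rewrite in_setD1 eqxx.
Qed.

Lemma card_setU1_leq (A : {set T}) a : #|a |: A| <= #|A|.+1.
Proof. by rewrite cardsU1; case: (a \notin A). Qed.

Section Pendant.
Variables (V : {set T}) (s t : T).
Hypotheses (sV : s \in V) (ts : t != s) (Ns : N s :&: V = [set s; t]).

Lemma pendant_nbhd : t \in N s /\ t \in V.
Proof. by apply/andP; rewrite -in_setI Ns !inE eqxx orbT. Qed.

Lemma pendant_edge : e s t.
Proof. by have [] := pendant_nbhd; rewrite cnbhdE (negbTE ts). Qed.

Lemma pendant_tV : t \in V.
Proof. by have [] := pendant_nbhd. Qed.

Lemma pendant_mem x : x \in V -> (s \in N x) = (x \in [set s; t]).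
Proof. by move=> xV; rewrite cnbhd_sym -Ns in_setI xV andbT. Qed.

Lemma pendant_separates (C : {set T}) :
  C \subset V :\ s -> dominates C t -> t \notin C -> separates C s t.
Proof.
move=> CV dt tC; rewrite /separates eq_sym; suff -> : N s :&: C = set0 by [].
apply/setP => c; rewrite in_set0 in_setI; apply/negbTE/andP => -[cNs cC].
have := subsetP CV c cC; rewrite in_setD1 => /andP[cs cV].
move: cNs; rewrite cnbhd_sym pendant_mem // !inE (negbTE cs) => /eqP ct.
by rewrite -ct cC in tC.
Qed.

Lemma pendant_code_mem C : idcode_in (V :\ s) C -> ~~ separates C s t -> t \in C.
Proof.
case=> CV dom _; apply: contraR => tC; apply: pendant_separates tC => //.
by apply: dom; rewrite in_setD1 ts pendant_tV.
Qed.

Lemma idcode_pendant_add C :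
  idcode_in (V :\ s) C -> separates C s t -> idcode_in V (s |: C).
Proof.
move=> hC sst; apply: idcode_in_setU1 => // x y.
by rewrite Ns !inE => /orP[]/eqP-> /orP[]/eqP->; rewrite ?eqxx // separates_sym.
Qed.

Lemma idcode_pendant_swap C v :
  idcode_in (V :\ s) C -> v \in V :\ s -> v != t -> ~~ separates (V :\ s) t v ->
  idcode_in V (s |: (v |: (C :\ t))).
Proof.
move=> hC vV vt tv; have hD := idcode_in_swap vV tv hC.
have [DV dom _] := hD; apply: idcode_pendant_add hD _.
apply: pendant_separates DV (dom t _) _; first by rewrite in_setD1 ts pendant_tV.
by rewrite in_setU1 in_setD1 eqxx eq_sym (negbTE vt).
Qed.

Lemma idcode_pendant_nbr C w :
  idcode_in (V :\ s) C -> ~~ separates C s t ->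
  {in V :\ s, forall y, y != t -> separates (V :\ s) t y} ->
  w \in V :\ s -> w != t -> e t w -> idcode_in V (w |: C).
Proof.
move=> hC nsep notwin wV' wt tw; have tC := pendant_code_mem hC nsep.
have [CV' dom sep] := hC; move/negPn/eqP: nsep => NsC.
have := wV'; rewrite in_setD1 => /andP[ws wV].
have wNs : (w \in N s) = false.
  by rewrite cnbhd_sym pendant_mem // !inE (negbTE ws) (negbTE wt).
have sub := subsetUr [set w] C.
have sep_s y : y \in V :\ s -> separates (w |: C) s y.
  move=> yV'; have [-> | yt] := eqVneq y t.
    by apply/separatesP; exists w; rewrite ?setU11 // wNs cnbhdE tw orbT.
  apply: separatesS sub _; rewrite /separates NsC.
  by apply: sep (notwin y yV' yt); rewrite // in_setD1 ts pendant_tV.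
split=> [|x xV | x y xV yV sepV].
- by rewrite subUset sub1set wV (subset_trans CV' (subsetDl _ _)).
- have [-> | xs] := eqVneq x s.
      apply/dominatesP; exists t; first by rewrite in_setU1 tC orbT.
    by rewrite cnbhd_sym pendant_mem ?pendant_tV // !inE eqxx orbT.
  by apply: dominatesS sub (dom x _); rewrite in_setD1 xs.
have xy : x != y by apply: contraTneq sepV => ->; rewrite separatesxx.
have [xs | xs] := eqVneq x s; first by subst x; apply: sep_s; rewrite in_setD1 yV andbT eq_sym.
have [-> | ys] := eqVneq y s; first by rewrite separates_sym; apply: sep_s; rewrite in_setD1 xs.
have xV' : x \in V :\ s by rewrite in_setD1 xs.
have yV' : y \in V :\ s by rewrite in_setD1 ys.
apply: separatesS sub (sep x y xV' yV' _).
have [xt | xt] := eqVneq x t; first by subst x; apply: notwin; rewrite // eq_sym.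
have [yt | yt] := eqVneq y t; first by subst y; rewrite separates_sym; apply: notwin.
apply: separates_setD1 sepV.
by rewrite !pendant_mem // !inE (negbTE xs) (negbTE xt) (negbTE ys) (negbTE yt).
Qed.

Hypothesis sep_st : separates V s t.

Lemma pendant_nbr : exists w, [/\ w \in V :\ s, w != t & e t w].
Proof.
have [tNs _] := pendant_nbhd; case/separatesP: sep_st => w wV neq.
have wNs : w \notin N s.
  apply: contra neq => wNs; have : w \in [set s; t] by rewrite -Ns in_setI wNs.
  by case/set2P=> ->; rewrite cnbhd_refl ?tNs // cnbhd_sym tNs.
have wNt : w \in N t by move: neq; rewrite (negbTE wNs); case: (w \in N t).
exists w; split.
- by rewrite in_setD1 wV andbT; apply: contraNneq wNs => ->; exact: cnbhd_refl.
- by apply: contraNneq wNs => ->.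
- by move: wNt; rewrite cnbhdE => /orP[/eqP wt | //]; rewrite wt tNs in wNs.
Qed.

Lemma pendant_step C :
  idcode_in (V :\ s) C -> exists2 D, idcode_in V D & #|D| <= #|C|.+1.
Proof.
move=> hC; have [sst | nsep] := boolP (separates C s t).
  by exists (s |: C); [exact: idcode_pendant_add | exact: card_setU1_leq].
have tC := pendant_code_mem hC nsep.
case: (boolP [exists v in V :\ s, (v != t) && ~~ separates (V :\ s) t v]).
  case/exists_inP => v vV' /andP[vt tv]; exists (s |: (v |: (C :\ t))).
    exact: idcode_pendant_swap.
  apply: leq_trans (card_setU1_leq _ _) _; rewrite ltnS (cardsD1 t C) tC.
  exact: card_setU1_leq.
move/exists_inPn => notwin; have [w [wV' wt tw]] := pendant_nbr.
exists (w |: C); last exact: card_setU1_leq.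
apply: idcode_pendant_nbr nsep _ wV' wt tw => // y yV' yt.
by move: (notwin y yV'); rewrite yt negbK.
Qed.

Lemma pendant_nQ_lt : nQ_in (V :\ s) < nQ_in V.
Proof.
apply: nQ_in_setD1_lt => //; first by rewrite Ns clique2 // pendant_edge.
have [w [wV' wt tw]] := pendant_nbr.
rewrite Ns setU1K ?inE 1?eq_sym //; apply/negP => /andP[_ /maxsetP[_ maxt]].
have tV' : t \in V :\ s by rewrite in_setD1 ts pendant_tV.
have := maxt [set t; w]; rewrite /clique_in subUset !sub1set tV' wV' clique2 //.
by rewrite setU11 => /(_ isT isT)/setP/(_ w); rewrite !inE eqxx orbT (negbTE wt).
Qed.

End Pendant.

Lemma idcode_isolated (V C : {set T}) s :
  s \in V -> N s :&: V = [set s] -> idcode_in (V :\ s) C -> idcode_in V (s |: C).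
Proof.
move=> sV Ns hC; apply: idcode_in_setU1 => // x y.
by rewrite Ns => /set1P-> /set1P->; rewrite eqxx.
Qed.

Lemma isolated_nQ_lt (V : {set T}) s :
  s \in V -> N s :&: V = [set s] -> nQ_in (V :\ s) < nQ_in V.
Proof.
move=> sV Ns; apply: nQ_in_setD1_lt; rewrite ?Ns ?clique1 //.
by rewrite setDv /maxclique_in eqxx.
Qed.

Definition connectedb (S : {set T}) :=
  [forall x in S, forall y in S, connect (induced_rel e S) x y].

Lemma connectedP (S : {set T}) : reflect (connected_set e S) (connectedb S).
Proof.
apply: (iffP forall_inP) => [cS x y xS | cS x xS]; first exact/forall_inP/cS.
by apply/forall_inP => y; exact: cS.
Qed.

Definition biconnectedb (S : {set T}) :=
  [&& 2 < #|S|, connectedb S & [forall v in S, connectedb (S :\ v)]].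

Lemma biconnectedP (S : {set T}) : reflect (biconnected_set e S) (biconnectedb S).
Proof.
apply: (iffP and3P) => [[S3 /connectedP cS /forall_inP cSv] | [S3 [cS cSv]]].
  by do !split=> //; move=> v /cSv/connectedP.
by split=> //; [exact/connectedP | apply/forall_inP => v /cSv/connectedP].
Qed.

Lemma biconnected_sub_block (S : {set T}) :
  biconnected_set e S -> exists2 B : {set T}, S \subset B & is_block e B.
Proof.
move/biconnectedP => bS; have [B maxB SB] := maxset_exists bS.
have /maxsetP[/biconnectedP bB maxB'] := maxB.
by exists B => //; split=> // S' BS' /biconnectedP /maxB'; apply.
Qed.

Lemma connected_path a p : path e a p -> connected_set e [set x in a :: p].
Proof.
move=> pth x y; rewrite !in_set => xp yp.
have ipth : path (induced_rel e [set x in a :: p]) a p.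
  apply: sub_in_path (allss _) pth => u v up vp uv.
  by rewrite /induced_rel /= !in_set up vp.
have irel_sym : symmetric (induced_rel e [set x in a :: p]).
  by move=> u v; rewrite /induced_rel /= e_sym andbCA.
apply: (connect_trans (y := a)); last exact: path_connect ipth y yp.
by rewrite (sym_connect_sym irel_sym); exact: path_connect ipth x xp.
Qed.

Lemma biconnected_cycle s :
  uniq s -> 2 < size s -> cycle e s -> biconnected_set e [set x in s].
Proof.
move=> us s3 cs; split; first by rewrite cardsE (card_uniqP us).
split=> [| v].
  by case: s us s3 cs => // a p _ _; rewrite /= rcons_path => /andP[/connected_path].
rewrite in_set => vs; have [i [|b q] rot_s] := rot_to vs.
  by move/(congr1 size): rot_s; rewrite size_rot => s1; rewrite s1 in s3.
have : cycle e (v :: b :: q) by rewrite -rot_s rot_cycle.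
rewrite /= rcons_path => /andP[_ /andP[bq _]].
suff -> : [set x in s] :\ v = [set x in b :: q] by exact: connected_path.
have /andP[vbq _] : uniq (v :: b :: q) by rewrite -rot_s rot_uniq.
apply/setP => x; rewrite in_setD1 !in_set -(mem_rot i) rot_s in_cons.
by case: eqVneq => [-> | _]; rewrite ?(negbTE vbq).
Qed.

Hypothesis e_block : block_graph e.

Lemma cycle_clique s :
  uniq s -> 2 < size s -> cycle e s -> {in s &, forall x y, x != y -> e x y}.
Proof.
move=> us s3 cs x y xs ys.
have [B sB /e_block/cliqueP cB] := biconnected_sub_block (biconnected_cycle us s3 cs).
by apply: cB; apply: (subsetP sB); rewrite in_set.
Qed.

Lemma chord_clique a p z q :
  uniq (a :: p ++ z :: q) -> path e a (p ++ z :: q) -> 0 < size p -> e z a ->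
  {in a :: rcons p z &, forall x y, x != y -> e x y}.
Proof.
rewrite -cat_rcons -cat_cons cat_uniq cat_path => /andP[u _] /andP[pth _] p0 za.
by apply: cycle_clique u _ _; rewrite /= ?size_rcons // rcons_path pth last_rcons.
Qed.

Section LongestPaths.
Variable V : {set T}.

Definition vpath a (p : seq T) :=
  [&& uniq (a :: p), path e a p & all (mem V) (a :: p)].

Definition longest_vpath a p :=
  vpath a p /\ forall a' p', vpath a' p' -> size p' <= size p.

Lemma longest_vpath_exists x : x \in V -> exists a p, longest_vpath a p.
Proof.
move=> xV; pose P k := [exists a, exists q : k.-tuple T, vpath a q].
have P0 : exists k, P k.
  exists 0; apply/existsP; exists x; apply/existsP; exists [tuple].
  by rewrite /vpath /= xV.
have Pmax k : P k -> k <= #|T|.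
  case/existsP => a /existsP[q /and3P[uq _ _]]; apply: ltnW.
  by rewrite -(size_tuple q) -[_.+1]/(size (a :: q)) -(card_uniqP uq) max_card.
case: (ex_maxnP P0 Pmax) => k /existsP[a /existsP[q aq]] maxk.
exists a, q; split=> // a' p' ap'; rewrite size_tuple; apply: maxk.
by apply/existsP; exists a'; apply/existsP; exists (in_tuple p').
Qed.

Lemma longest_cnbhd a p : longest_vpath a p -> {subset N a :&: V <= a :: p}.
Proof.
move=> [/and3P[ua pa Va] maxp] z; rewrite in_setI cnbhdE => /andP[za zV].
apply/negPn/negP => zp; have /maxp : vpath z (a :: p).
  have az : e a z by case/orP: za => // /eqP zaE; rewrite zaE mem_head in zp.
  by apply/and3P; split; rewrite /= 1?e_sym ?az ?zp ?zV.
by rewrite /= ltnn.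
Qed.

Lemma longest_cnbhd_next a b r : longest_vpath a (b :: r) -> N a :&: V \subset N b.
Proof.
move=> lp; have [/and3P[u pth _] _] := lp.
have ab : e a b by case/andP: pth.
apply/subsetP => z zN; have := longest_cnbhd lp zN.
rewrite !in_cons => /or3P[/eqP-> | /eqP-> | zr]; rewrite ?cnbhd_refl //.
  by rewrite cnbhdE e_sym ab orbT.
have za : e z a.
  move: zN; rewrite in_setI cnbhdE e_sym => /andP[/orP[/eqP zaE | //] _].
  by move: u; rewrite /= -zaE in_cons zr orbT.
case/splitPr: zr u pth => r1 r2 u pth.
have cl := chord_clique (p := b :: r1) u pth isT za.
rewrite cnbhdE cl ?orbT ?in_cons ?mem_rcons ?mem_head ?eqxx ?orbT //.
by move: u => /= /and3P[_ + _]; apply: contraNneq => ->; rewrite mem_cat mem_head orbT.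
Qed.

Lemma longest_vpath_swap a b r y :
  longest_vpath a (b :: r) -> y \in r -> e a y -> longest_vpath b (a :: r).
Proof.
move=> [/and3P[u pth allV] maxp] yr ay; split; last by move=> a' p' /maxp.
have swap : perm_eq (a :: b :: r) (b :: a :: r).
  by apply/permPl; exact: (perm_catCA [:: a] [:: b] r).
rewrite /vpath -(perm_uniq swap) -(perm_all _ swap) u allV andbT.
move: pth => /= /andP[ab br]; rewrite e_sym ab /=.
case/splitPr: yr u br => r1 r2 u br.
have abr : path e a ((b :: r1) ++ y :: r2) by rewrite /= ab.
have ya : e y a by rewrite e_sym.
have cl := chord_clique (p := b :: r1) u abr isT ya.
case: r1 {abr} cl u br => [|c r1] cl u /=; first by rewrite ay => /andP[].
move=> /andP[_ ->]; rewrite andbT; apply: cl; rewrite ?in_cons ?mem_head ?eqxx ?orbT //.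
by move: u => /= /andP[+ _]; apply: contra => /eqP <-; rewrite !in_cons eqxx !orbT.
Qed.

Lemma leaf_exists x :
  {in V &, forall x y, x != y -> separates V x y} -> x \in V ->
  exists2 s, s \in V &
    (N s :&: V = [set s] \/ exists2 t, t != s & N s :&: V = [set s; t]).
Proof.
move=> twinfree xV; have [a [p lp]] := longest_vpath_exists xV.
have [/and3P[u pth allV] _] := lp.
have aV : a \in V by case/andP: allV.
have aN : a \in N a :&: V by rewrite in_setI cnbhd_refl.
exists a => //; case: p lp u pth allV => [|b r] lp u pth allV.
  left; apply/eqP; rewrite eqEsubset sub1set aN andbT.
  by apply/subsetP => z /(longest_cnbhd lp); rewrite mem_seq1 => /eqP ->; rewrite set11.
have bV : b \in V by case/and3P: allV.
have ab : a != b by move: u => /= /andP[]; rewrite in_cons negb_or => /andP[].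
have [Nab | /subsetPn[y yN yab]] := boolP (N a :&: V \subset [set a; b]).
  right; exists b; first by rewrite eq_sym.
  apply/eqP; rewrite eqEsubset Nab /= subUset !sub1set aN in_setI cnbhdE bV andbT.
  by case/andP: pth => ->; rewrite orbT.
have yr : y \in r.
  by move: (longest_cnbhd lp yN) yab; rewrite !in_cons !inE; case: (y == a); case: (y == b).
have ay : e a y.
  by move: yN yab; rewrite in_setI cnbhdE !inE => /andP[/orP[-> | //] _].
have lp' := longest_vpath_swap lp yr ay.
move: (twinfree a b aV bV ab); rewrite /separates eqEsubset !subsetI !subsetIr !andbT.
by rewrite (longest_cnbhd_next lp) (longest_cnbhd_next lp').
Qed.

End LongestPaths.

Lemma exists_idcode_in (V : {set T}) : exists2 C, idcode_in V C & #|C| <= nQ_in V.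
Proof.
have [n] := ubnP #|V|; elim: n V => // n IH V /ltnSE leVn.
have IHs u : u \in V -> exists2 C, idcode_in (V :\ u) C & #|C| <= nQ_in (V :\ u).
  by move=> uV; apply: IH; move: leVn; rewrite (cardsD1 u V) uV.
have [-> | [x xV]] := set_0Vmem V.
  by exists set0; [split=> [|y|y]; rewrite ?sub0set ?inE | rewrite cards0].
case: (boolP [exists u in V, exists v in V, (u != v) && ~~ separates V u v]).
  case/exists_inP => u uV /exists_inP[v vV /andP[uv tw]].
  have [C hC leC] := IHs u uV; exists C; first exact: idcode_in_twin_del vV uv tw hC.
  exact: leq_trans leC (nQ_in_setD1 uV).
move=> twins; have twinfree : {in V &, forall x y, x != y -> separates V x y}.
  move=> y z yV zV yz; apply: contraR twins => tw.
  by apply/exists_inP; exists y => //; apply/exists_inP; exists z; rewrite ?yz.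
have [s sV [Ns | [t ts Ns]]] := leaf_exists twinfree xV; have [C hC leC] := IHs s sV.
  exists (s |: C); first exact: idcode_isolated.
  exact: leq_trans (card_setU1_leq _ _) (leq_ltn_trans leC (isolated_nQ_lt sV Ns)).
have sst : separates V s t by apply: twinfree; rewrite ?(pendant_tV Ns) 1?eq_sym.
have [D hD leD] := pendant_step sV ts Ns sst hC.
by exists D => //; exact: leq_trans leD (leq_ltn_trans leC (pendant_nQ_lt sV ts Ns sst)).
Qed.

Lemma nQ_in_setT : nQ_in [set: T] <= nQ e.
Proof.
apply/subset_leq_card/subsetP => K; rewrite !inE => /andP[_].
by rewrite (@maxset_eq _ _ (is_clique e)) // => B; rewrite /clique_in subsetT.
Qed.

End IdentifyingCodes.

Lemma bigmin_leq (I : eqType) (r : seq I) (P : pred I) (F : I -> nat) m i :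
  i \in r -> P i -> \big[minn/m]_(j <- r | P j) F j <= F i.
Proof.
elim: r => [|a r IHr] //; rewrite in_cons big_cons => /orP[/eqP <- -> | ir Pi].
  exact: geq_minl.
by case: (P a); [exact: leq_trans (geq_minr _ _) (IHr ir Pi) | exact: IHr].
Qed.

Lemma gammaID_leq (T : finType) (e : rel T) (C : {set T}) :
  is_idcode e C -> gammaID e <= #|C|.
Proof. exact: bigmin_leq (mem_index_enum C). Qed.

Theorem theorem2p1 (T : finType) (e : rel T) :
  symmetric e -> irreflexive e ->
  block_graph e -> identifiable e ->
  gammaID e <= nQ e.
Proof.
move=> e_sym _ e_block e_id.
have [C [_ domC sepC] leC] := exists_idcode_in e_sym e_block [set: T].
have idC : is_idcode e C.
  apply/andP; split; apply/forallP => u; first exact: domC.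
  by apply/forallP => v; apply/implyP => uv; apply: sepC; rewrite // /separates !setIT e_id.
exact: leq_trans (gammaID_leq idC) (leq_trans leC (nQ_in_setT e)).
Qed.
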